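(* Suppose the conditional gradient algorithm chooses $\theta_k$ by the exact line search $\theta_k\in\arg\min_{\theta\in[0,1]}\{(1-\theta)\mathrm{gap}(x_k,g_k)+\mathcal D(x_k,s_k,\theta)\}$, and $q>1$, $r\in[0,1]$ are such that $(\mathcal D,\mathrm{gap},\mathrm{subopt})$ satisfies the $(q,r)$ weak growth property with some finite $M>0$. Then for $k=0,1,\dots$ \[ \mathrm{subopt}_{k+1}\le\mathrm{subopt}_k\Big(1-\tfrac{q-1}{q}\min\Big\{1,\Big(\tfrac{\mathrm{subopt}_k^{1-r}}{M}\Big)^{\frac1{q-1}}\Big\}\Big). \] If $r=1$ then $\mathrm{subopt}_k\le\mathrm{subopt}_0\big(1-\frac{q-1}{q}\min\{1,M^{-1/(q-1)}\}\big)^k$. If $r\in[0,1)$ then $\mathrm{subopt}_k\le\mathrm{subopt}_0(1-\frac{q-1}{q})^k$ for $k=0,\dots,k_0$, where $k_0$ is the smallest $k$ with $\mathrm{subopt}_k^{1-r}\le M$, and for $k\ge k_0$ \[ \mathrm{subopt}_k\le\Big(\mathrm{subopt}_{k_0}^{\frac{r-1}{q-1}}+\frac{1-r}{q}\cdot\frac{1}{M^{\frac1{q-1}}}(k-k_0)\Big)^{\frac{q-1}{r-1}}. \]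
   Context: Let $f,\Psi:\mathbb{R}^n\to\mathbb{R}\cup\{\infty\}$ be closed proper convex functions such that (A1) $f$ is differentiable on $\mathrm{dom}(\Psi)$, and (A2) for every $x\in\mathrm{dom}(f)$ the set $\arg\min_s\{\langle\nabla f(x),s\rangle+\Psi(s)\}$ is nonempty. $f^*,\Psi^*$ denote convex conjugates; $\arg\min_y\{\langle g,y\rangle+\Psi(y)\}=\partial\Psi^*(-g)$. $D_f(y,x)=f(y)-f(x)-\langle\nabla f(x),y-x\rangle$. $\mathrm{gap}(x,u)=f(x)+\Psi(x)+f^*(u)+\Psi^*(-u)$. $\mathcal{D}(x,s,\theta)=D_f(x+\theta(s-x),x)+\Psi(x+\theta(s-x))-(1-\theta)\Psi(x)-\theta\Psi(s)$. Suboptimality gap: $\mathrm{subopt}(x)=f(x)+\Psi(x)-\min_y\{f(y)+\Psi(y)\}$ for $x\in\mathrm{dom}(\Psi)$ (the minimum assumed attained/finite). Conditional gradient algorithm: given $x_0\in\mathrm{dom}(\Psi)$, for $k=0,1,2,\dots$ let $g_k=\nabla f(x_k)$, pick $s_k\in\arg\min_y\{\langle g_k,y\rangle+\Psi(y)\}$ and $\theta_k\in[0,1]$, and set $x_{k+1}=(1-\theta_k)x_k+\theta_k s_k$. $\mathrm{subopt}_k=\mathrm{subopt}(x_k)$. $(q,r)$ weak growth property ($q>1$, $r\in[0,1]$): there is a finite $M>0$ such that for all $x\in\mathrm{dom}(\Psi)$, $g=\nabla f(x)$, $s\in\partial\Psi^*(-g)$: $\mathcal D(x,s,\theta)\,\mathrm{subopt}(x)^{1-r}\le\frac{M\theta^q}{q}\mathrm{gap}(x,g)$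 for all $\theta\in[0,1]$. *)

From HB Require Import structures.
From mathcomp Require Import all_boot all_order all_algebra.
From mathcomp Require Import all_classical all_reals all_analysis.
Set Implicit Arguments. Unset Strict Implicit. Unset Printing Implicit Defensive.
Import Order.TTheory GRing.Theory Num.Theory.
Import numFieldNormedType.Exports.
Local Open Scope classical_set_scope.
Local Open Scope ring_scope.

Section Defs.
Variables (R : realType) (n : nat).
Local Notation vec := 'rV[R]_n.

Definition dot (u v : vec) : R := \sum_(i < n) u 0 i * v 0 i.

Definition dom (h : vec -> \bar R) (x : vec) : Prop := (h x < +oo)%E.

Definition proper_fun (h : vec -> \bar R) : Prop :=
  (forall x, h x != -oo%E) /\ (exists x, dom h x).

Definition convex_fun (h : vec -> \bar R) : Prop :=
  forall (x y : vec) (t : R), 0 < t < 1 ->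
    (h ((1 - t) *: x + t *: y)%R <= (1 - t)%:E * h x + t%:E * h y)%E.

(* closed = lower semicontinuous *)
Definition lsc (h : vec -> \bar R) : Prop :=
  forall (x : vec) (a : R), (a%:E < h x)%E ->
    exists2 d : R, 0 < d & forall y : vec, `|y - x| < d -> (a%:E < h y)%E.

Definition closed_proper_convex (h : vec -> \bar R) : Prop :=
  [/\ lsc h, proper_fun h & convex_fun h].

Definition is_grad (h : vec -> \bar R) (x g : vec) : Prop :=
  h x \is a fin_num /\
  forall eps : R, 0 < eps -> exists2 d : R, 0 < d &
    forall y : vec, `|y - x| < d ->
      h y \is a fin_num /\
      `|fine (h y) - fine (h x) - dot g (y - x)| <= eps * `|y - x|.

Definition conj (h : vec -> \bar R) (u : vec) : \bar R :=
  ereal_sup (range (fun x => ((dot u x)%:E - h x)%E)).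

Definition subdiff (h : vec -> \bar R) (v s : vec) : Prop :=
  h v \is a fin_num /\ forall w, (h v + (dot s (w - v))%:E <= h w)%E.

Definition is_argmin_lin (Psi : vec -> \bar R) (g s : vec) : Prop :=
  forall y, ((dot g s)%:E + Psi s <= (dot g y)%:E + Psi y)%E.

Definition bregman (f : vec -> \bar R) (gradf : vec -> vec) (y x : vec) : \bar R :=
  (f y - f x - (dot (gradf x) (y - x))%:E)%E.

Definition gap (f Psi : vec -> \bar R) (x u : vec) : \bar R :=
  (f x + Psi x + conj f u + conj Psi (- u))%E.

Definition Dcal (f Psi : vec -> \bar R) (gradf : vec -> vec) (x s : vec) (t : R)
  : \bar R :=
  let y := x + t *: (s - x) in
  (bregman f gradf y x + Psi y - (1 - t)%:E * Psi x - t%:E * Psi s)%E.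

(* suboptimality gap, opt = min (f + Psi); real-valued on dom Psi *)
Definition subopt (f Psi : vec -> \bar R) (opt : R) (x : vec) : R :=
  fine (f x + Psi x)%E - opt.

Definition weak_growth (f Psi : vec -> \bar R) (gradf : vec -> vec) (opt : R)
  (q r M : R) : Prop :=
  forall (x s : vec) (t : R), dom Psi x -> subdiff (conj Psi) (- gradf x) s ->
    0 <= t <= 1 ->
    (Dcal f Psi gradf x s t * ((subopt f Psi opt x) `^ (1 - r))%:E
      <= (M * t `^ q / q)%:E * gap f Psi x (gradf x))%E.

End Defs.

From HB Require Import structures.
From mathcomp Require Import all_boot all_order all_algebra.
From mathcomp Require Import all_classical all_reals all_analysis.
From mathcomp.algebra_tactics Require Import ring lra.
Set Implicit Arguments.
Unset Strict Implicit.
Unset Printing Implicit Defensive.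

Import Order.TTheory GRing.Theory Num.Theory.
Import numFieldNormedType.Exports.
Local Open Scope classical_set_scope.
Local Open Scope ring_scope.

(* When s_k minimizes the linearization, the Fenchel-Young equalities give
     gap = Psi(x_k) + <g_k, x_k - s_k> - Psi(s_k)   and
     D(t) - t gap = subopt(x_k + t (s_k - x_k)) - subopt(x_k),
   so the exact line search minimizes the suboptimality on the segment.  It
   therefore does at least as well as the step
   t = min {1, (subopt^(1-r) / M)^(1/(q-1))}, for which the weak growth
   property gives D(t) <= t gap / q; as gap >= subopt (weak duality), this is
   the one-step contraction.  For r = 1 the contraction factor is constant.
   For r < 1 it is at most 1/q while subopt^(1-r) > M, so this level is reached
   after finitely many steps; from then on Bernoulli's inequality
   (1 + x)^a >= 1 + a x (a <= 0) turns the contraction into a growth of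
   subopt^((r-1)/(q-1)) by at least (1-r) / (q M^(1/(q-1))) per step. *)

Section RealPowers.
Context {R : realType}.
Implicit Types (p q t x y M P : R).

Lemma powR_ge1 x p : 1 <= x -> 0 <= p -> 1 <= x `^ p.
Proof. by move=> x1 p0; rewrite -(powRr0 x) ler_powR. Qed.

Lemma ler_powR_nonpos x y p : 0 < x -> x <= y -> p <= 0 -> y `^ p <= x `^ p.
Proof.
move=> x0 xy p0; have y0 : 0 < y by apply: lt_le_trans xy.
by rewrite /powR !gt_eqF // ler_expR ler_wnM2l // ler_ln.
Qed.

Lemma powR_ge1DMx x p : -1 < x -> p <= 0 -> 1 + p * x <= (1 + x) `^ p.
Proof.
move=> x1 p0; have x10 : 0 < 1 + x by lra.
rewrite /powR gt_eqF //; apply: le_trans (expR_ge1Dx _).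
by rewrite lerD2l ler_wnM2l // le_ln1Dx.
Qed.

Lemma le_root_powR q M P t : 1 < q -> 0 < M -> 0 <= P ->
  0 <= t <= (P / M) `^ (1 / (q - 1)) -> M * t `^ q <= P * t.
Proof.
move=> q1 M0 P0 /andP[t0 tC].
have q10 : 0 < q - 1 by rewrite subr_gt0.
have tq1 : t `^ (q - 1) <= P / M.
  have PM : 0 <= P / M by rewrite divr_ge0 // ltW.
  have -> : P / M = ((P / M) `^ (1 / (q - 1))) `^ (q - 1).
    by rewrite -powRrM mul1r mulVf ?lt0r_neq0 // powRr1.
  by rewrite ge0_ler_powR ?nnegrE ?powR_ge0 // ltW.
rewrite -(mulr_powRB1 t0 (lt_trans ltr01 q1)) mulrCA mulrC ler_wpM2r //.
by rewrite -ler_pdivlMl // mulrC.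
Qed.

Lemma powR_inv x p : 0 <= x -> x^-1 `^ p = (x `^ p)^-1.
Proof. by move=> x0; rewrite -powR_inv1 // powRAC powR_inv1 // powR_ge0. Qed.

Lemma geometric_lt (a z e : R) :
  0 <= z < 1 -> 0 < e -> exists k : nat, a * z ^+ k < e.
Proof.
move=> /andP[z0 z1] e0; have z_norm : `|z| < 1 by rewrite ger0_norm.
have /cvgrPdist_lt/(_ e e0) := cvg_geometric a z_norm.
case=> N _ hN; exists N.
have := hN N (leqnn N); rewrite sub0r normrN /=.
exact: le_lt_trans (ler_norm _).
Qed.

End RealPowers.

Section ConvergenceRate.
Context {R : realType}.
Variables (q r M : R).
Hypotheses (q_gt1 : 1 < q) (M_gt0 : 0 < M).

Let w := (q - 1) / q.
Let e := 1 / (q - 1).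

Local Lemma q_gt0 : 0 < q. Proof. by apply: lt_trans q_gt1. Qed.
Local Lemma e_gt0 : 0 < e. Proof. by rewrite divr_gt0 // subr_gt0. Qed.
Local Lemma w_ge0 : 0 <= w. Proof. by rewrite divr_ge0 ?subr_ge0 ?ltW // q_gt0. Qed.
Local Lemma one_minus_w : 1 - w = q^-1.
Proof. by rewrite /w; field; rewrite lt0r_neq0 // q_gt0. Qed.
Local Lemma w_le1 : w <= 1.
Proof. by rewrite -subr_ge0 one_minus_w invr_ge0 ltW // q_gt0. Qed.

Lemma line_search_decrease (S S' G : R) (D : R -> R) :
  0 <= S -> S <= G -> D 0 = 0 ->
  (forall t, 0 <= t <= 1 -> S' <= S + D t - t * G) ->
  (forall t, 0 <= t <= 1 -> D t * S `^ (1 - r) <= M * t `^ q / q * G) ->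
  S' <= S * (1 - w * Num.min 1 ((S `^ (1 - r) / M) `^ e)).
Proof.
move=> S0 SG D0 step growth.
have S'S : S' <= S.
  by have := step 0; rewrite lexx ler01 D0 mul0r addr0 subr0; apply.
set P := S `^ (1 - r).
have [P0|Pn0] := eqVneq P 0.
  by rewrite P0 mul0r powR0 ?min_r ?lt0r_neq0 ?e_gt0 // mulr0 subr0 mulr1.
have P_gt0 : 0 < P by rewrite lt_neqAle eq_sym Pn0 powR_ge0.
set t := Num.min 1 ((P / M) `^ e).
have t01 : 0 <= t <= 1 by rewrite ge_min lexx le_min ler01 powR_ge0.
have tC : 0 <= t <= (P / M) `^ e.
  by rewrite ge_min lexx orbT andbT; case/andP: t01.
(* [t] is chosen so that [M t^q <= S^(1-r) t] (lemma [le_root_powR]) *)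
have Dt : D t <= t * G / q.
  rewrite -(ler_pM2r P_gt0); apply: le_trans (growth t t01) _.
  have G0 : 0 <= G / q by apply: divr_ge0; [exact: le_trans SG | exact: ltW q_gt0].
  have -> : M * t `^ q / q * G = M * t `^ q * (G / q) by ring.
  have -> : t * G / q * P = P * t * (G / q) by ring.
  by rewrite ler_wpM2r // le_root_powR // ltW.
have tSG : t * S * w <= t * G * w.
  by rewrite ler_wpM2r ?w_ge0 // ler_wpM2l //; case/andP: t01.
have tGq : t * G / q = t * G - t * G * w.
  by rewrite /w; field; rewrite lt0r_neq0 // q_gt0.
rewrite tGq in Dt.
have := step t t01.
have -> : S * (1 - w * t) = S - t * S * w by ring.
lra.
Qed.

Lemma rate_increment (S S' : R) : r < 1 -> 0 < S -> 0 < S' ->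
  S `^ (1 - r) <= M ->
  S' <= S * (1 - w * Num.min 1 ((S `^ (1 - r) / M) `^ e)) ->
  S `^ ((r - 1) / (q - 1)) + (1 - r) / q * (M `^ e)^-1
    <= S' `^ ((r - 1) / (q - 1)).
Proof.
move=> r1 S0 S'0 SM decr.
have q1n0 : q - 1 != 0 by rewrite lt0r_neq0 // subr_gt0.
set a := (r - 1) / (q - 1).
have a_le0 : a <= 0 by rewrite /a pmulr_lle0 ?invr_gt0 ?subr_gt0 // subr_le0 ltW.
set C := (S `^ (1 - r) / M) `^ e.
have C1 : C <= 1.
  have SM1 : 0 < S `^ (1 - r) / M <= 1.
    by rewrite divr_gt0 ?powR_gt0 //= ler_pdivrMr // mul1r.
  by rewrite -(powRr0 (S `^ (1 - r) / M)) ger_powR // ltW // e_gt0.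
rewrite min_r // in decr.
set y := w * C.
have y0 : 0 <= y by rewrite mulr_ge0 ?w_ge0 ?powR_ge0.
have y1 : 0 < 1 - y by rewrite -(pmulr_rgt0 _ S0) (lt_le_trans S'0 decr).
(* the factor [S ^ a] exactly cancels the dependence of [C] on [S] *)
have SaC : S `^ a * C = (M `^ e)^-1.
  have M_ge0 := ltW M_gt0.
  rewrite /C powRM ?powR_ge0 ?invr_ge0 // -powRrM.
  have -> : (1 - r) * e = - a by rewrite /a /e; field.
  by rewrite powRN mulrA mulfV ?mul1r ?lt0r_neq0 ?powR_gt0 // powR_inv.
apply: le_trans (_ : S `^ a * (1 + a * - y) <= _).
  rewrite mulrDr mulr1 lerD2l.
  have -> : S `^ a * (a * - y) = - a * w * (S `^ a * C) by rewrite /y; ring.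
  rewrite SaC (_ : - a * w = (1 - r) / q) // /a /w; field.
  by rewrite q1n0 lt0r_neq0 // q_gt0.
apply: le_trans (_ : S `^ a * (1 - y) `^ a <= _).
  by rewrite ler_wpM2l ?powR_ge0 // powR_ge1DMx //; lra.
rewrite -powRM ?(ltW S0) ?(ltW y1) //.
exact: ler_powR_nonpos.
Qed.

Section RateSequence.
Variable u : nat -> R.
Hypothesis u_ge0 : forall k, 0 <= u k.
Hypothesis u_rec : forall k,
  u k.+1 <= u k * (1 - w * Num.min 1 ((u k `^ (1 - r) / M) `^ e)).

Lemma rate_nonincreasing : {homo u : i j / (i <= j)%N >-> j <= i}.
Proof.
apply/nonincreasing_seqP => k; apply: le_trans (u_rec k) _.
by rewrite ler_piMr // lerBlDr lerDl mulr_ge0 ?w_ge0 // le_min ler01 powR_ge0.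
Qed.

Lemma rate_linear : r = 1 ->
  forall k, u k <= u 0%N * (1 - w * Num.min 1 (M `^ e)^-1) ^+ k.
Proof.
move=> r1; set m := Num.min 1 (M `^ e)^-1.
have m0 : 0 <= m by rewrite le_min ler01 invr_ge0 powR_ge0.
have m1 : m <= 1 by rewrite ge_min lexx.
have factor_ge0 : 0 <= 1 - w * m by rewrite subr_ge0 mulr_ile1 ?w_ge0 ?w_le1.
elim=> [|k IH]; first by rewrite expr0 mulr1.
apply: le_trans (_ : u k * (1 - w * m) <= _).
  by have := u_rec k; rewrite r1 subrr powRr0 div1r powR_inv // ltW.
by rewrite exprSr mulrA ler_wpM2r.
Qed.

Lemma rate_geometric_phase K : (forall k, (k < K)%N -> M < u k `^ (1 - r)) ->
  forall k, (k <= K)%N -> u k <= u 0%N * (1 - w) ^+ k.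
Proof.
move=> above; elim=> [|k IH] kK; first by rewrite expr0 mulr1.
apply: le_trans (_ : u k * (1 - w) <= _); last first.
  by rewrite exprSr mulrA ler_wpM2r ?IH 1?ltnW // one_minus_w invr_ge0 ltW // q_gt0.
have := u_rec k; rewrite min_l ?mulr1 //.
apply: powR_ge1; last exact: ltW e_gt0.
by rewrite ler_pdivlMr // mul1r ltW // above.
Qed.

Lemma rate_reaches_level : r < 1 -> exists k, u k `^ (1 - r) <= M.
Proof.
move=> r1; apply: contrapT => /forallNP above.
have {}above k : M < u k `^ (1 - r) by rewrite ltNge; apply/negP.
have r1_gt0 : 0 < 1 - r by rewrite subr_gt0.
set eps := M `^ (1 - r)^-1.
have eps_gt0 : 0 < eps by rewrite powR_gt0.
have z01 : 0 <= 1 - w < 1.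
  by rewrite one_minus_w invr_ge0 invf_lt1 ?(ltW q_gt0) ?q_gt0.
have [k uk] := geometric_lt (u 0%N) z01 eps_gt0.
have /(gt0_ltr_powR r1_gt0) : u k < eps.
  exact: le_lt_trans (rate_geometric_phase (fun j _ => above j) (leqnn k)) uk.
rewrite !nnegrE u_ge0 (ltW eps_gt0) -powRrM mulVf ?lt0r_neq0 // powRr1 ?ltW //.
by move=> /(_ isT isT); rewrite ltNge ltW // above.
Qed.

Lemma rate_increments k0 : r < 1 -> u k0 `^ (1 - r) <= M ->
  forall d, 0 < u (k0 + d)%N ->
  u k0 `^ ((r - 1) / (q - 1)) + (1 - r) / q * (M `^ e)^-1 * d%:R
    <= u (k0 + d)%N `^ ((r - 1) / (q - 1)).
Proof.
move=> r1 level; elim=> [|d IH] ud; first by rewrite addn0 mulr0 addr0.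
rewrite addnS in ud *.
have ud' : 0 < u (k0 + d)%N by apply: lt_le_trans ud (rate_nonincreasing (leqnSn _)).
have below : u (k0 + d)%N `^ (1 - r) <= M.
  apply: le_trans level; apply: ge0_ler_powR; rewrite ?nnegrE ?subr_ge0 ?u_ge0 ?(ltW r1) //.
  exact: rate_nonincreasing (leq_addr _ _).
apply: le_trans (rate_increment r1 ud' ud below (u_rec _)).
by rewrite -natr1 mulrDr mulr1 addrA lerD2r IH.
Qed.

Lemma rate_sublinear_phase k0 : r < 1 -> u k0 `^ (1 - r) <= M ->
  forall k, (k0 <= k)%N ->
  u k <= (u k0 `^ ((r - 1) / (q - 1)) + (1 - r) / q * (M `^ e)^-1 * (k - k0)%:R)
         `^ ((q - 1) / (r - 1)).
Proof.
move=> r1 level k k0k.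
have [->|uk_neq0] := eqVneq (u k) 0; first exact: powR_ge0.
have uk : 0 < u k by rewrite lt_neqAle eq_sym uk_neq0 u_ge0.
have uk0 : 0 < u k0 by apply: lt_le_trans uk (rate_nonincreasing k0k).
have := rate_increments (d := (k - k0)%N) r1 level; rewrite subnKC // => /(_ uk) incr.
have inv_exp : (r - 1) / (q - 1) * ((q - 1) / (r - 1)) = 1.
  by field; rewrite ltr0_neq0 ?lt0r_neq0 ?subr_lt0 ?subr_gt0.
have -> : u k = (u k `^ ((r - 1) / (q - 1))) `^ ((q - 1) / (r - 1)).
  by rewrite -powRrM inv_exp powRr1 // ltW.
apply: ler_powR_nonpos => //.
  apply: lt_le_trans (powR_gt0 ((r - 1) / (q - 1)) uk0) _.
  rewrite lerDl mulr_ge0 ?ler0n //.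
  by rewrite mulr_ge0 ?invr_ge0 ?powR_ge0 // divr_ge0 ?subr_ge0 ?ltW ?q_gt0.
by rewrite pmulr_rle0 ?subr_gt0 // invr_le0 subr_le0 ltW.
Qed.

Lemma rate_of_recursion :
  (r = 1 -> forall k, u k <= u 0%N * (1 - w * Num.min 1 (M `^ e)^-1) ^+ k) /\
  (r < 1 -> exists k0 : nat,
     [/\ u k0 `^ (1 - r) <= M,
         (forall k, (k < k0)%N -> M < u k `^ (1 - r)),
         (forall k, (k <= k0)%N -> u k <= u 0%N * (1 - w) ^+ k) &
         (forall k, (k0 <= k)%N ->
            u k <= (u k0 `^ ((r - 1) / (q - 1)) + (1 - r) / q * (M `^ e)^-1 * (k - k0)%:R)
                   `^ ((q - 1) / (r - 1)))]).
Proof.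
split; first exact: rate_linear.
move=> r1; have [k0 level minimal] := find_ex_minn (rate_reaches_level r1).
have above k : (k < k0)%N -> M < u k `^ (1 - r).
  by move=> kk0; rewrite ltNge; apply: contraTN kk0 => /minimal; rewrite -leqNgt.
exists k0; split => //; [exact: rate_geometric_phase | exact: rate_sublinear_phase].
Qed.

End RateSequence.

End ConvergenceRate.

Section Dot.
Context {R : realType} {n : nat}.
Implicit Types u v w : 'rV[R]_n.

Lemma dotC u v : dot u v = dot v u.
Proof. by apply: eq_bigr => i _; rewrite mulrC. Qed.

Lemma dotDr u v w : dot u (v + w) = dot u v + dot u w.
Proof. by rewrite /dot -big_split; apply: eq_bigr => i _; rewrite mxE mulrDr. Qed.

Lemma dotZr u (a : R) v : dot u (a *: v) = a * dot u v.
Proof. by rewrite /dot mulr_sumr; apply: eq_bigr => i _; rewrite mxE mulrCA. Qed.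

Lemma dotNr u v : dot u (- v) = - dot u v.
Proof. by rewrite -scaleN1r dotZr mulN1r. Qed.

Lemma dotBr u v w : dot u (v - w) = dot u v - dot u w.
Proof. by rewrite dotDr dotNr. Qed.

Lemma dotNl u v : dot (- u) v = - dot u v.
Proof. by rewrite dotC dotNr dotC. Qed.

Lemma dot0r u : dot u 0 = 0.
Proof. by rewrite -(scale0r 0) dotZr mul0r. Qed.

End Dot.

Section ConvexFunctions.
Context {R : realType} {n : nat}.
Implicit Types (h : 'rV[R]_n -> \bar R) (g u x y s : 'rV[R]_n).

Lemma proper_neqNy h y : proper_fun h -> h y != -oo%E.
Proof. by case=> + _; apply. Qed.

Lemma dom_fin h y : proper_fun h -> dom h y -> exists p, h y = p%:E.
Proof.
move=> hp hy; case E: (h y) => [p||]; first by exists p.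
  by move: hy; rewrite /dom E.
by have := proper_neqNy y hp; rewrite E.
Qed.

Lemma argmin_lin_dom h g s : proper_fun h -> is_argmin_lin h g s -> dom h s.
Proof.
move=> hp hs; case: (hp) => _ [y hy]; have [p hp_y] := dom_fin hp hy.
have := hs y; rewrite hp_y /dom; case E: (h s) => [ps||] le; first exact: ltry.
  by move: le; rewrite addey // leye_eq -EFinD.
by have := proper_neqNy s hp; rewrite E.
Qed.

Lemma dom_convex h x y t : proper_fun h -> convex_fun h ->
  dom h x -> dom h y -> 0 <= t <= 1 -> dom h ((1 - t) *: x + t *: y).
Proof.
move=> hp hc hx hy /andP[t0 t1].
have [->|t_neq0] := eqVneq t 0; first by rewrite subr0 scale1r scale0r addr0.
have [->|t_neq1] := eqVneq t 1; first by rewrite subrr scale0r add0r scale1r.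
have [px hpx] := dom_fin hp hx; have [py hpy] := dom_fin hp hy.
have t01 : 0 < t < 1 by rewrite !lt_neqAle t0 t1 eq_sym t_neq0 t_neq1.
apply: le_lt_trans (hc x y t t01) _.
by rewrite hpx hpy -!EFinM -EFinD ltry.
Qed.

Lemma conj_attained h u s :
  (forall y, ((dot u y)%:E - h y <= (dot u s)%:E - h s)%E) ->
  conj h u = ((dot u s)%:E - h s)%E.
Proof.
move=> hmax; apply/le_anti/andP; split.
  by apply: ge_ereal_sup => _ [y _ <-]; exact: hmax.
by apply: ereal_sup_ubound; exists s.
Qed.

Lemma conj_argmin_lin h g s : proper_fun h -> is_argmin_lin h g s ->
  conj h (- g) = ((dot (- g) s)%:E - h s)%E.
Proof.
move=> hp hs; have [ps hps] := dom_fin hp (argmin_lin_dom hp hs).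
apply: conj_attained => y; have := hs y; rewrite hps !dotNl.
case E: (h y) => [py||] le.
- by rewrite -!EFinB lee_fin; rewrite -!EFinD lee_fin in le; lra.
- by rewrite addeNy leNye.
- by have := proper_neqNy y hp; rewrite E.
Qed.

Lemma argmin_lin_subdiff_conj h g s : proper_fun h -> is_argmin_lin h g s ->
  subdiff (conj h) (- g) s.
Proof.
move=> hp hs; have [ps hps] := dom_fin hp (argmin_lin_dom hp hs).
rewrite /subdiff (conj_argmin_lin hp hs) hps; split => // w.
apply: le_trans (_ : ((dot w s)%:E - ps%:E <= conj h w)%E); last first.
  by apply: ereal_sup_ubound; exists s => //; rewrite hps.
rewrite -EFinB -EFinD -EFinB lee_fin opprK dotDr dotNl (dotC s w) (dotC s g).
lra.
Qed.

End ConvexFunctions.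

Section Gradient.
Context {R : realType} {n : nat}.
Variables (f : 'rV[R]_n -> \bar R) (x g : 'rV[R]_n).
Hypotheses (f_proper : proper_fun f) (f_convex : convex_fun f).
Hypothesis f_grad : is_grad f x g.

Lemma grad_ineq y : (f x + (dot g (y - x))%:E <= f y)%E.
Proof.
have [fx_fin near_x] := f_grad; set fx := fine (f x).
rewrite -(fineK fx_fin) -/fx.
case Ey: (f y) => [fy||]; [|exact: leey|by have := proper_neqNy y f_proper; rewrite Ey].
rewrite -EFinD lee_fin; set v := y - x.
have [v0|v_neq0] := eqVneq v 0.
  by rewrite v0 dot0r addr0 /fx -(subr0_eq v0) Ey.
have v_gt0 : 0 < `|v| by rewrite normr_gt0.
apply/ler_addgt0Pr => eps eps_gt0.
have [d d_gt0 near] := near_x (eps / `|v|) (divr_gt0 eps_gt0 v_gt0).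
set t := d / (2 * (d + `|v|)).
have dv_gt0 : 0 < d + `|v| by rewrite addr_gt0.
have t_gt0 : 0 < t by rewrite divr_gt0 // mulr_gt0.
have t_lt1 : t < 1 by rewrite ltr_pdivrMr ?mulr_gt0 // mul1r; lra.
have tv_lt : t * `|v| < d.
  rewrite /t mulrAC ltr_pdivrMr ?mulr_gt0 //.
  have : 0 < d * `|v| by rewrite mulr_gt0.
  nra.
set z := (1 - t) *: x + t *: y.
have zx : z - x = t *: v by apply/rowP => i; rewrite !mxE; ring.
have zx_lt : `|z - x| < d by rewrite zx normrZ gtr0_norm.
have [fz_fin] := near z zx_lt.
rewrite zx normrZ gtr0_norm // dotZr -/fx.
rewrite (_ : eps / `|v| * (t * `|v|) = t * eps); last by field; rewrite gt_eqF.
move=> /ler_normlP[taylor _].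
have t01 : 0 < t < 1 by rewrite t_gt0 t_lt1.
have := f_convex x y t01; rewrite -/z -(fineK fz_fin) -(fineK fx_fin) Ey -/fx.
rewrite -!EFinM -EFinD lee_fin => convex.
have : t * (fx + dot g v - eps - fy) <= 0 by lra.
by rewrite pmulr_rle0 //; lra.
Qed.

Lemma conj_grad : conj f g = ((dot g x)%:E - f x)%E.
Proof.
have [fx_fin _] := f_grad; apply: conj_attained => y.
have := grad_ineq y; rewrite -(fineK fx_fin).
case: (f y) (proper_neqNy y f_proper) => [fy _||//] le; last by rewrite addeNy leNye.
by rewrite -!EFinB lee_fin; rewrite -EFinD lee_fin dotBr in le; lra.
Qed.

End Gradient.

Section ConditionalGradientStep.
Context {R : realType} {n : nat}.
Variables (f Psi : 'rV[R]_n -> \bar R) (gradf : 'rV[R]_n -> 'rV[R]_n) (opt : R).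
Hypotheses (f_proper : proper_fun f) (f_convex : convex_fun f).
Hypotheses (Psi_proper : proper_fun Psi) (Psi_convex : convex_fun Psi).
Hypothesis f_grad : forall y, dom Psi y -> is_grad f y (gradf y).
Hypothesis opt_attained : exists xs, (f xs + Psi xs)%E = opt%:E.
Hypothesis opt_le : forall y, (opt%:E <= f y + Psi y)%E.

Local Notation subopt := (subopt f Psi opt).

Lemma dom_f_fin y : dom Psi y -> exists p, f y = p%:E.
Proof. by move=> /f_grad[fy_fin _]; exists (fine (f y)); rewrite fineK. Qed.

Lemma subopt_ge0 y : dom Psi y -> 0 <= subopt y.
Proof.
move=> hy; have [fy hfy] := dom_f_fin hy; have [py hpy] := dom_fin Psi_proper hy.
by have := opt_le y; rewrite /subopt hfy hpy -EFinD lee_fin subr_ge0.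
Qed.

(* Weak duality: Fenchel-Young inequalities at a minimizer of [f + Psi]. *)
Lemma subopt_le_gap y u : dom Psi y -> ((subopt y)%:E <= gap f Psi y u)%E.
Proof.
move=> hy; have [fy hfy] := dom_f_fin hy; have [py hpy] := dom_fin Psi_proper hy.
have [xs opt_xs] := opt_attained.
have /andP[fxs_fin pxs_fin] : (f xs \is a fin_num) && (Psi xs \is a fin_num).
  by rewrite -fin_numD opt_xs.
rewrite -(fineK fxs_fin) -(fineK pxs_fin) -EFinD in opt_xs; case: opt_xs => opt_xs.
apply: le_trans (_ : ((fy + py)%:E + ((dot u xs)%:E - f xs)
                       + ((dot (- u) xs)%:E - Psi xs) <= _)%E).
  rewrite -(fineK fxs_fin) -(fineK pxs_fin) -!EFinB -!EFinD lee_fin dotNl.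
  by rewrite /subopt hfy hpy /=; lra.
rewrite /gap hfy hpy -EFinD; apply: leeD; first apply: leeD => //.
  by apply: ereal_sup_ubound; exists xs.
by apply: ereal_sup_ubound; exists xs.
Qed.

Lemma gap_argmin_lin X S : dom Psi X -> is_argmin_lin Psi (gradf X) S ->
  gap f Psi X (gradf X) = (fine (Psi X) + dot (gradf X) (X - S) - fine (Psi S))%:E.
Proof.
move=> hX hS; have [fX hfX] := dom_f_fin hX; have [pX hpX] := dom_fin Psi_proper hX.
have [pS hpS] := dom_fin Psi_proper (argmin_lin_dom Psi_proper hS).
rewrite /gap (conj_grad f_proper f_convex (f_grad hX)) (conj_argmin_lin Psi_proper hS).
by rewrite hfX hpX hpS dotNl dotBr /= -!EFinB -!EFinD; congr EFin; ring.
Qed.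

Lemma DcalE X S t : dom Psi X -> is_argmin_lin Psi (gradf X) S -> 0 <= t <= 1 ->
  Dcal f Psi gradf X S t = (subopt ((1 - t) *: X + t *: S) - subopt X
    + t * (fine (Psi X) + dot (gradf X) (X - S) - fine (Psi S)))%:E.
Proof.
move=> hX hS t01; have hS' := argmin_lin_dom Psi_proper hS.
have hZ := dom_convex Psi_proper Psi_convex hX hS' t01.
have [fX hfX] := dom_f_fin hX; have [pX hpX] := dom_fin Psi_proper hX.
have [fZ hfZ] := dom_f_fin hZ; have [pZ hpZ] := dom_fin Psi_proper hZ.
have [pS hpS] := dom_fin Psi_proper hS'.
rewrite /Dcal /bregman /subopt /=.
have -> : X + t *: (S - X) = (1 - t) *: X + t *: S by apply/rowP => i; rewrite !mxE; ring.
have -> : (1 - t) *: X + t *: S - X = t *: (S - X) by apply/rowP => i; rewrite !mxE; ring.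
rewrite hfX hpX hfZ hpZ hpS /= dotZr !dotBr.
by rewrite -!EFinD; congr EFin; ring.
Qed.

Lemma line_search_step q r M X S th : 1 < q -> 0 < M ->
  weak_growth f Psi gradf opt q r M ->
  dom Psi X -> is_argmin_lin Psi (gradf X) S -> 0 <= th <= 1 ->
  (forall t, 0 <= t <= 1 ->
     ((1 - th)%:E * gap f Psi X (gradf X) + Dcal f Psi gradf X S th
        <= (1 - t)%:E * gap f Psi X (gradf X) + Dcal f Psi gradf X S t)%E) ->
  subopt ((1 - th) *: X + th *: S) <= subopt X *
    (1 - (q - 1) / q * Num.min 1 ((subopt X `^ (1 - r) / M) `^ (1 / (q - 1)))).
Proof.
move=> q1 M0 growth hX hS th01 line_search.
set G := fine (Psi X) + dot (gradf X) (X - S) - fine (Psi S).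
pose D t := subopt ((1 - t) *: X + t *: S) - subopt X + t * G.
have hG : gap f Psi X (gradf X) = G%:E := gap_argmin_lin hX hS.
have hD t : 0 <= t <= 1 -> Dcal f Psi gradf X S t = (D t)%:E := DcalE hX hS.
apply: (line_search_decrease q1 M0 (G := G) (D := D) (subopt_ge0 hX)).
- by have := subopt_le_gap (gradf X) hX; rewrite hG lee_fin.
- by rewrite /D subr0 scale1r scale0r addr0 subrr mul0r addr0.
- move=> t t01; have := line_search t t01.
  by rewrite hG !hD // -!EFinM -!EFinD lee_fin /D; lra.
- move=> t t01; have := growth X S t hX (argmin_lin_subdiff_conj Psi_proper hS) t01.
  by rewrite hD // hG -!EFinM lee_fin.
Qed.

End ConditionalGradientStep.

Unset Implicit Arguments.

Theorem theorem3 (R : realType) (n : nat) (f Psi : 'rV[R]_n -> \bar R)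
  (gradf : 'rV[R]_n -> 'rV[R]_n) (opt q r M : R)
  (x s : nat -> 'rV[R]_n) (theta : nat -> R) :
  closed_proper_convex f -> closed_proper_convex Psi ->
  (* (A1): f differentiable on dom Psi, with gradient gradf *)
  (forall y, dom Psi y -> is_grad f y (gradf y)) ->
  (* (A2) *)
  (forall y, dom Psi y -> exists s0, is_argmin_lin Psi (gradf y) s0) ->
  (* opt = min_y (f y + Psi y), attained and finite *)
  (exists xs, (f xs + Psi xs)%E = opt%:E) ->
  (forall y, (opt%:E <= f y + Psi y)%E) ->
  1 < q -> 0 <= r <= 1 -> 0 < M ->
  weak_growth f Psi gradf opt q r M ->
  (* conditional gradient algorithm with exact line search *)
  dom Psi (x 0%N) ->
  (forall k, is_argmin_lin Psi (gradf (x k)) (s k)) ->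
  (forall k, 0 <= theta k <= 1 /\
     forall t, 0 <= t <= 1 ->
       ((1 - theta k)%:E * gap f Psi (x k) (gradf (x k))
          + Dcal f Psi gradf (x k) (s k) (theta k)
        <= (1 - t)%:E * gap f Psi (x k) (gradf (x k))
          + Dcal f Psi gradf (x k) (s k) t)%E) ->
  (forall k, x k.+1 = (1 - theta k) *: x k + theta k *: s k) ->
  let sub k := subopt f Psi opt (x k) in
  (forall k, sub k.+1 <= sub k * (1 - (q - 1) / q *
       Num.min 1 ((sub k `^ (1 - r) / M) `^ (1 / (q - 1))))) /\
  (r = 1 -> forall k, sub k <= sub 0%N * (1 - (q - 1) / q *
       Num.min 1 (M `^ (1 / (q - 1)))^-1) ^+ k) /\
  (r < 1 -> exists k0 : nat,
     [/\ sub k0 `^ (1 - r) <= M,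
         (forall k, (k < k0)%N -> M < sub k `^ (1 - r)),
         (forall k, (k <= k0)%N -> sub k <= sub 0%N * (1 - (q - 1) / q) ^+ k) &
         (forall k, (k0 <= k)%N ->
            sub k <= (sub k0 `^ ((r - 1) / (q - 1))
                      + (1 - r) / q * (M `^ (1 / (q - 1)))^-1 * (k - k0)%:R)
                     `^ ((q - 1) / (r - 1)))]).
Proof.
move=> [_ f_proper f_convex] [_ Psi_proper Psi_convex] f_grad _ opt_attained opt_le.
move=> q1 _ M0 growth x0_dom s_argmin line_search x_next sub.
have s_dom k : dom Psi (s k) := argmin_lin_dom Psi_proper (s_argmin k).
have x_dom k : dom Psi (x k).
  elim: k => [//|k IH]; rewrite x_next.
  exact: dom_convex Psi_proper Psi_convex IH (s_dom k) (line_search k).1.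
have rec k : sub k.+1 <= sub k * (1 - (q - 1) / q *
    Num.min 1 ((sub k `^ (1 - r) / M) `^ (1 / (q - 1)))).
  have [th01 th_opt] := line_search k; rewrite /sub x_next.
  exact: (line_search_step f_proper f_convex Psi_proper Psi_convex f_grad
    opt_attained opt_le q1 M0 growth (x_dom k) (s_argmin k) th01 th_opt).
have sub_ge0 k : 0 <= sub k := subopt_ge0 Psi_proper f_grad opt_le (x_dom k).
split; first exact: rec.
exact: (rate_of_recursion (u := sub) q1 M0 sub_ge0 rec).
Qed.
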